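(* Let $\phi\in C^3((0,\infty))$, $\eta=\phi'$ and $\hat\eta(r)=\eta(r)+2\eta(2r)$, and suppose there are constants $0<a_0<\tilde r_1<\tilde r_2<2a_0$ and $a_1>a_0$ such that: $\eta'(r)>0$ for $0<r<\tilde r_1$ and $\eta'(r)<0$ for $r>\tilde r_1$; $\eta''(r)<0$ for $0<r<\tilde r_2$ and $\eta''(r)>0$ for $r>\tilde r_2$; $\hat\eta(r)<0$ for $0<r<a_0$ and $\hat\eta(r)>0$ for $r>a_0$; $\hat\eta'(r)>0$ for $0<r<a_1$ and $\hat\eta'(r)<0$ for $r>a_1$. Let $N,K$ be positive integers with $K<N-1$. For $\mathbf r=(r_{-N},\dots,r_N)\in(0,\infty)^{2N+1}$ define forces $F^{QCF}_j(\mathbf r)$, $j=-N,\dots,N+1$, by $F^{QCF}_{-N}(\mathbf r)=\eta(r_{-N})+2\eta(2r_{-N})$; $F^{QCF}_j(\mathbf r)=[\eta(r_j)+2\eta(2r_j)]-[\eta(r_{j-1})+2\eta(2r_{j-1})]$ for $-N+1\le j\le -K$ and for $K+1\le j\le N$; $F^{QCF}_j(\mathbf r)=[\eta(r_j)+\eta(r_j+r_{j+1})]-[\eta(r_{j-1})+\eta(r_{j-1}+r_{j-2})]$ for $-K+1\le j\le K$; $F^{QCF}_{N+1}(\mathbf r)=-[\eta(r_N)+2\eta(2r_N)]$. Let $f_{-N},\dots,f_{N+1}\in\mathbb R$ be anti-symmetric, i.e. $f_{j+1}=-f_{-j}$ for $j=0,\dots,N$, and set $\Phi_j=-\sum_{i=-N}^{j}f_i$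 for $j=-N,\dots,N$. Suppose $r_L,r_U$ satisfy $\tilde r_2/2<r_L<r_U$ and $\eta'(r_U)+12\eta'(2r_L)\ge0$. If $\eta(r_L)+4\eta(2r_L)-2\eta(2r_U)<\Phi_j<\eta(r_U)+4\eta(2r_U)-2\eta(2r_L)$ for $j=-N,\dots,N$, then the equilibrium equations $F^{QCF}_j(\mathbf r)+f_j=0$, $j=-N,\dots,N+1$, have a unique symmetric solution $\mathbf r$ in $\Omega=(r_L,r_U)^{2N+1}$.
   Context: $F^{QCF}_j$ is the force-based quasicontinuum force on the $j$-th representative atom of a one-dimensional chain, expressed in terms of the lattice spacings $r_j$ ($-K+1\le j\le K$ atomistic, the rest continuum), with nearest and next-nearest neighbour pair interactions given by $\phi$; $f_j$ are external forces. A vector $\mathbf r$ is symmetric if $r_{-j}=r_j$ for $j=1,\dots,N$. *)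

From Stdlib Require Import Reals Lra Lia ZArith.
From Coquelicot Require Import Coquelicot.
Open Scope R_scope.

Definition eta_hat (eta : R -> R) (x : R) : R := eta x + 2 * eta (2 * x).

(* Force-based QC forces F^{QCF}_j, j = -N .. N+1, lattice spacings r : Z -> R
   (only r_{-N}, ..., r_N are used). *)
Definition F_QCF (eta : R -> R) (N K : Z) (r : Z -> R) (j : Z) : R :=
  if (j =? - N)%Z then eta_hat eta (r (- N)%Z)
  else if (j =? N + 1)%Z then - eta_hat eta (r N)
  else if ((- K + 1 <=? j)%Z && (j <=? K)%Z)%bool then
    (eta (r j) + eta (r j + r (j + 1)%Z))
    - (eta (r (j - 1)%Z) + eta (r (j - 1)%Z + r (j - 2)%Z))
  else eta_hat eta (r j) - eta_hat eta (r (j - 1)%Z).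

Definition Phi (N : Z) (f : Z -> R) (j : Z) : R :=
  - sum_f_R0 (fun k => f (Z.of_nat k - N)%Z) (Z.to_nat (j + N)).

Definition symmetric_vec (N : Z) (r : Z -> R) : Prop :=
  forall j : Z, (1 <= j <= N)%Z -> r (- j)%Z = r j.

From Stdlib Require Import Reals ZArith Lra Lia Ranalysis5.
From Stdlib Require Import ClassicalEpsilon FunctionalExtensionality.
From Coquelicot Require Import Coquelicot.
Open Scope R_scope.

(* By reflection symmetry only the equations j <= 0 matter, and summing them from -N
   turns them into "stress_j = Phi_j".  In the continuum region this reads
   hat eta(r_j) = Phi_j, which determines r_j because on [rL, rU] the slope of hat eta
   is at least m = eta'(rU) + 4 eta'(2 rL) > 0.  In the atomistic region it reads
   sigma_j(r) = Phi_j + c, with sigma_j the atomistic stress and c = c(r_{-K+1}) the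
   stress jump at the interface.  For fixed c this system is strictly diagonally dominant
   with antitone off-diagonal dependence (eta decreases beyond 2 rL), so a discrete
   maximum principle gives comparison, and Knaster-Tarski applied to the coordinatewise
   relaxation gives existence.  The comparison also makes the solution nondecreasing and
   m^-1-Lipschitz in c, so the scalar equation c = c(r_{-K+1}(c)) has a solution by the
   intermediate value theorem, unique because c(.) is antitone. *)

Lemma is_derive_continuity_pt (f : R -> R) x l : is_derive f x l -> continuity_pt f x.
Proof.
  intros Hd. apply continuity_pt_filterlim.
  apply (ex_derive_continuous (K := R_AbsRing) (V := R_NormedModule) f x).
  now exists l.
Qed.

Lemma MVT_pos (f df : R -> R) a b : 0 < a -> a <= b ->
  (forall x, 0 < x -> is_derive f x (df x)) ->
  exists c, a <= c <= b /\ f b - f a = df c * (b - a).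
Proof.
  intros Ha Hab Hd.
  destruct (MVT_gen f a b df) as [c [Hc E]].
  - intros x Hx. apply Hd. rewrite Rmin_left in Hx by lra. lra.
  - intros x Hx. apply (is_derive_continuity_pt f x (df x)), Hd.
    rewrite Rmin_left in Hx by lra. lra.
  - rewrite Rmin_left, Rmax_right in Hc by lra. eauto.
Qed.

Lemma increment_ge_of_derive_ge (f df : R -> R) k a b : 0 < a -> a <= b ->
  (forall x, 0 < x -> is_derive f x (df x)) -> (forall c, a <= c <= b -> k <= df c) ->
  k * (b - a) <= f b - f a.
Proof.
  intros Ha Hab Hd Hk. destruct (MVT_pos f df a b Ha Hab Hd) as [c [Hc ->]].
  specialize (Hk c Hc). nra.
Qed.

Lemma increment_le_of_derive_le (f df : R -> R) k a b : 0 < a -> a <= b ->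
  (forall x, 0 < x -> is_derive f x (df x)) -> (forall c, a <= c <= b -> df c <= k) ->
  f b - f a <= k * (b - a).
Proof.
  intros Ha Hab Hd Hk. destruct (MVT_pos f df a b Ha Hab Hd) as [c [Hc ->]].
  specialize (Hk c Hc). nra.
Qed.

Lemma lipschitz_continuity_pt (g : R -> R) x L : 0 < L ->
  (forall u, Rabs (g u - g x) <= L * Rabs (u - x)) -> continuity_pt g x.
Proof.
  intros HL Hg eps Heps. exists (eps / L). split.
  - apply Rdiv_lt_0_compat; lra.
  - intros u [_ Hu]. simpl in *. unfold R_dist in *.
    apply Rle_lt_trans with (1 := Hg u).
    apply Rmult_lt_reg_r with (/ L); [apply Rinv_0_lt_compat; lra|].
    replace (L * Rabs (u - x) * / L) with (Rabs (u - x)) by (field; lra).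
    exact Hu.
Qed.

Lemma IVT_closed (f : R -> R) a b y : a <= b ->
  (forall x, a <= x <= b -> continuity_pt f x) -> f a <= y <= f b ->
  exists x, a <= x <= b /\ f x = y.
Proof.
  intros Hab Hc Hy.
  destruct (Req_dec (f a) y) as [Ea|Na]; [exists a; split; [lra|exact Ea]|].
  destruct (Req_dec (f b) y) as [Eb|Nb]; [exists b; split; [lra|exact Eb]|].
  assert (a <> b) by (intros <-; lra).
  destruct (IVT_interv (fun x => f x - y) a b) as [x [Hx Ex]]; try lra.
  - intros x Hx. apply continuity_pt_minus; [now apply Hc|].
    apply continuity_pt_const. intros ? ?; reflexivity.
  - exists x. split; [exact Hx|lra].
Qed.

Definition clamp (a b x : R) : R := Rmax a (Rmin b x).

Lemma clamp_in a b x : a <= b -> a <= clamp a b x <= b.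
Proof. intros. unfold clamp, Rmax, Rmin. repeat destruct Rle_dec; lra. Qed.

Lemma clamp_id a b x : a <= x <= b -> clamp a b x = x.
Proof. intros. unfold clamp, Rmax, Rmin. repeat destruct Rle_dec; lra. Qed.

Lemma clamp_lipschitz a b u v : Rabs (clamp a b u - clamp a b v) <= Rabs (u - v).
Proof.
  unfold clamp, Rmax, Rmin.
  repeat destruct Rle_dec; unfold Rabs; repeat destruct Rcase_abs; lra.
Qed.

Lemma Z_interval_argmax (d : Z -> R) lo hi : (lo <= hi)%Z ->
  exists j, (lo <= j <= hi)%Z /\ forall i, (lo <= i <= hi)%Z -> d i <= d j.
Proof.
  revert hi. apply (Zlt_lower_bound_ind
    (fun hi => exists j, (lo <= j <= hi)%Z /\ forall i, (lo <= i <= hi)%Z -> d i <= d j)).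
  intros hi IH Hle. destruct (Z.eq_dec hi lo) as [->|Hne].
  - exists lo. split; [lia|]. intros i Hi. replace i with lo by lia. lra.
  - destruct (IH (hi - 1)%Z ltac:(lia)) as [j [Hj Hmax]].
    destruct (Rle_dec (d j) (d hi)).
    + exists hi. split; [lia|]. intros i Hi.
      destruct (Z.eq_dec i hi) as [->|]; [lra|]. specialize (Hmax i ltac:(lia)). lra.
    + exists j. split; [lia|]. intros i Hi.
      destruct (Z.eq_dec i hi) as [->|]; [lra|]. apply Hmax. lia.
Qed.

Lemma eq0_of_steps (e : Z -> R) lo hi : e lo = 0 ->
  (forall j, (lo < j <= hi)%Z -> e j = e (j - 1)%Z) ->
  forall j, (lo <= j <= hi)%Z -> e j = 0.
Proof.
  intros H0 Hstep j [Hlo Hhi]. revert j Hlo Hhi.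
  apply (Zlt_lower_bound_ind (fun j => (j <= hi)%Z -> e j = 0)).
  intros j IH Hlo Hhi. destruct (Z.eq_dec j lo) as [->|Hne]; [exact H0|].
  rewrite Hstep by lia. apply IH; lia.
Qed.

Definition box {I : Type} (D : I -> Prop) (a b : R) (x : I -> R) : Prop :=
  forall i, D i -> a <= x i <= b.

Lemma monotone_fixpoint {I : Type} (D : I -> Prop) (a b : R) (T : (I -> R) -> I -> R) :
  a <= b ->
  (forall x, box D a b x -> box D a b (T x)) ->
  (forall x y, box D a b x -> box D a b y -> (forall i, D i -> x i <= y i) ->
     forall i, D i -> T x i <= T y i) ->
  exists u, box D a b u /\ forall i, D i -> T u i = u i.
Proof.
  intros Hab T_box T_mono.
  (* the coordinatewise supremum of the post-fixpoints x <= T x is a fixpoint *)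
  set (post x := box D a b x /\ forall i, D i -> x i <= T x i).
  set (E i v := exists x, post x /\ v = x i).
  set (u i := epsilon (inhabits 0) (is_lub (E i))).
  assert (post_a : post (fun _ => a)).
  { assert (Ba : box D a b (fun _ => a)) by (intros i _; lra).
    split; [exact Ba|]. intros i Hi. apply (T_box _ Ba i Hi). }
  assert (u_lub : forall i, D i -> is_lub (E i) (u i)).
  { intros i Hi. apply epsilon_spec.
    destruct (completeness (E i)) as [l Hl]; [| |now exists l].
    - exists b. intros v [x [[Bx _] ->]]. now apply Bx.
    - exists a, (fun _ => a). now split. }
  assert (below_u : forall x, post x -> forall i, D i -> x i <= u i).
  { intros x Hx i Hi. apply (u_lub i Hi). now exists x. }
  assert (Bu : box D a b u).
  { intros i Hi. split.
    - apply (below_u _ post_a i Hi).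
    - apply (u_lub i Hi). intros v [x [[Bx _] ->]]. now apply Bx. }
  assert (u_post : forall i, D i -> u i <= T u i).
  { intros i Hi. apply (u_lub i Hi). intros v [x [[Bx Hx] ->]].
    apply Rle_trans with (T x i); [now apply Hx|].
    apply T_mono; auto. apply below_u. now split. }
  assert (Tu_below : forall i, D i -> T u i <= u i).
  { apply below_u. split; [now apply T_box|].
    apply T_mono; [exact Bu | now apply T_box | exact u_post]. }
  exists u. split; [exact Bu|]. intros i Hi.
  apply Rle_antisym; [apply Tu_below | apply u_post]; exact Hi.
Qed.

Definition upd (x : Z -> R) (j : Z) (y : R) : Z -> R :=
  fun i => if (i =? j)%Z then y else x i.

Lemma upd_eq x j y : upd x j y j = y.
Proof. unfold upd. now rewrite Z.eqb_refl. Qed.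

Lemma upd_neq x j y i : i <> j -> upd x j y i = x i.
Proof. intros H. unfold upd. now destruct (Z.eqb_spec i j). Qed.

Lemma upd_id x j : upd x j (x j) = x.
Proof.
  apply functional_extensionality. intros i. unfold upd.
  destruct (Z.eqb_spec i j); now subst.
Qed.

Lemma upd_box (D : Z -> Prop) a b x j y : box D a b x -> a <= y <= b -> box D a b (upd x j y).
Proof. intros Bx Hy i Hi. unfold upd. destruct (i =? j)%Z; auto. Qed.

Section DominantSystem.
Variables (lo hi : Z) (a b m : R) (g : (Z -> R) -> Z -> R).
Let D (j : Z) : Prop := (lo <= j <= hi)%Z.
Hypothesis m_pos : 0 < m.
Hypothesis g_dominant : forall x y j, box D a b x -> box D a b y -> D j ->
  0 <= x j - y j -> (forall i, D i -> x i - y i <= x j - y j) ->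
  m * (x j - y j) <= g x j - g y j.

Lemma dominant_comparison x y d : box D a b x -> box D a b y ->
  (forall j, D j -> g x j - g y j <= d) ->
  forall i, D i -> m * (x i - y i) <= Rmax 0 d.
Proof.
  intros Bx By Hd i Hi.
  destruct (Z_interval_argmax (fun k => x k - y k) lo hi) as [j [Hj Hmax]];
    [unfold D in Hi; lia|].
  pose proof (Hmax i Hi). pose proof (Rmax_l 0 d). pose proof (Rmax_r 0 d).
  destruct (Rle_dec (x j - y j) 0).
  - nra.
  - pose proof (g_dominant x y j Bx By Hj ltac:(lra) Hmax). pose proof (Hd j Hj). nra.
Qed.

Lemma dominant_own_increasing x j y y' : box D a b x -> D j ->
  a <= y -> y < y' -> y' <= b -> g (upd x j y) j < g (upd x j y') j.
Proof.
  intros Bx Hj Hy Hyy' Hy'.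
  pose proof (g_dominant (upd x j y') (upd x j y) j) as Hg.
  rewrite !upd_eq in Hg.
  enough (m * (y' - y) <= g (upd x j y') j - g (upd x j y) j) by nra.
  apply Hg; try (apply upd_box; auto; lra); auto; [lra|].
  intros i Hi. unfold upd. destruct (i =? j)%Z; lra.
Qed.

Lemma dominant_others_antitone x x' j : box D a b x -> box D a b x' -> D j ->
  (forall i, D i -> x i <= x' i) -> x j = x' j -> g x' j <= g x j.
Proof.
  intros Bx Bx' Hj Hle Hj_eq.
  enough (m * (x j - x' j) <= g x j - g x' j) by (rewrite Hj_eq, Rminus_diag in H; lra).
  apply g_dominant; auto; [lra|]. intros i Hi. specialize (Hle i Hi). lra.
Qed.

Variable t : Z -> R.
Hypothesis g_solvable : forall x j, box D a b x -> D j ->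
  exists y, a <= y <= b /\ g (upd x j y) j = t j.

Definition relax (x : Z -> R) (j : Z) : R :=
  epsilon (inhabits 0) (fun y => a <= y <= b /\ g (upd x j y) j = t j).

Lemma relax_spec x j : box D a b x -> D j ->
  a <= relax x j <= b /\ g (upd x j (relax x j)) j = t j.
Proof. intros. unfold relax. apply epsilon_spec. now apply g_solvable. Qed.

Lemma relax_monotone x x' : box D a b x -> box D a b x' ->
  (forall i, D i -> x i <= x' i) -> forall j, D j -> relax x j <= relax x' j.
Proof.
  intros Bx Bx' Hle j Hj.
  destruct (relax_spec x j Bx Hj) as [B1 E1].
  destruct (relax_spec x' j Bx' Hj) as [B2 E2].
  apply Rnot_lt_le. intros Hlt.
  pose proof (dominant_own_increasing x' j (relax x' j) (relax x j) Bx' Hj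
    ltac:(lra) Hlt ltac:(lra)).
  assert (g (upd x' j (relax x j)) j <= g (upd x j (relax x j)) j).
  { apply dominant_others_antitone; try (apply upd_box; auto); auto.
    - intros i Hi. unfold upd. destruct (i =? j)%Z; auto; lra.
    - now rewrite !upd_eq. }
  lra.
Qed.

Theorem dominant_system_solvable : a <= b ->
  exists u, box D a b u /\ forall j, D j -> g u j = t j.
Proof.
  intros Hab. destruct (monotone_fixpoint D a b relax Hab) as [u [Bu Fix]].
  - intros x Bx j Hj. now apply relax_spec.
  - exact relax_monotone.
  - exists u. split; [exact Bu|]. intros j Hj.
    destruct (relax_spec u j Bu Hj) as [_ E]. now rewrite Fix, upd_id in E.
Qed.

End DominantSystem.

Section EtaSlopes.
Variables (eta eta1 eta2 : R -> R) (rt1 rt2 rL rU : R).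
Hypothesis eta_deriv : forall x, 0 < x -> is_derive eta x (eta1 x).
Hypothesis eta1_deriv : forall x, 0 < x -> is_derive eta1 x (eta2 x).
Hypothesis eta1_neg : forall x, x > rt1 -> eta1 x < 0.
Hypothesis eta2_neg : forall x, 0 < x < rt2 -> eta2 x < 0.
Hypothesis eta2_pos : forall x, x > rt2 -> eta2 x > 0.
Hypothesis rt_order : 0 < rt1 < rt2.
Hypothesis rL_gt : rt2 / 2 < rL.
Hypothesis slope_condition : eta1 rU + 12 * eta1 (2 * rL) >= 0.

Lemma eta1_far_neg : eta1 (2 * rL) < 0.
Proof. apply eta1_neg. lra. Qed.

Lemma near_far_dominance : 0 < eta1 rU + 4 * eta1 (2 * rL).
Proof. pose proof eta1_far_neg. lra. Qed.

Lemma rU_lt_rt2 : rU < rt2.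
Proof.
  pose proof eta1_far_neg. destruct (Rle_dec rU rt1); [lra|].
  pose proof (eta1_neg rU ltac:(lra)). lra.
Qed.

Lemma eta1_near_ge x : rL <= x <= rU -> eta1 rU <= eta1 x.
Proof.
  intros Hx. pose proof rU_lt_rt2.
  enough (eta1 rU - eta1 x <= 0 * (rU - x)) by lra.
  apply (increment_le_of_derive_le eta1 eta2); auto; try lra.
  intros c Hc. apply Rlt_le, eta2_neg. lra.
Qed.

Lemma eta1_far_ge x : 2 * rL <= x -> eta1 (2 * rL) <= eta1 x.
Proof.
  intros Hx. enough (0 * (x - 2 * rL) <= eta1 x - eta1 (2 * rL)) by lra.
  apply (increment_ge_of_derive_ge eta1 eta2); auto; try lra.
  intros c Hc. apply Rlt_le, eta2_pos. lra.
Qed.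

Lemma eta_near_slope x y : rL <= x <= y -> y <= rU -> eta1 rU * (y - x) <= eta y - eta x.
Proof.
  intros Hx Hy. apply (increment_ge_of_derive_ge eta eta1); auto; try lra.
  intros c Hc. apply eta1_near_ge. lra.
Qed.

Lemma eta_far_slope u v : 2 * rL <= v <= u -> eta1 (2 * rL) * (u - v) <= eta u - eta v.
Proof.
  intros Hv. apply (increment_ge_of_derive_ge eta eta1); auto; try lra.
  intros c Hc. apply eta1_far_ge. lra.
Qed.

Lemma eta_far_antitone u v : 2 * rL <= v <= u -> eta u <= eta v.
Proof.
  intros Hv. enough (eta u - eta v <= 0 * (u - v)) by lra.
  apply (increment_le_of_derive_le eta eta1); auto; try lra.
  intros c Hc. apply Rlt_le, eta1_neg. lra.
Qed.

End EtaSlopes.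

Definition atom_stress (eta : R -> R) (r : Z -> R) (j : Z) : R :=
  eta (r j) + eta (r j + r (j + 1)%Z) + eta (r j + r (j - 1)%Z).

Lemma atom_stress_reflect eta r j :
  (forall k, (j - 1 <= k <= j + 1)%Z -> r (- k)%Z = r k) ->
  atom_stress eta r (- j) = atom_stress eta r j.
Proof.
  intros Hs. unfold atom_stress.
  replace (- j + 1)%Z with (- (j - 1))%Z by ring.
  replace (- j - 1)%Z with (- (j + 1))%Z by ring.
  rewrite !Hs by lia. ring.
Qed.

Lemma F_QCF_first eta N K r : F_QCF eta N K r (- N)%Z = eta_hat eta (r (- N)%Z).
Proof. unfold F_QCF. now rewrite Z.eqb_refl. Qed.

Lemma F_QCF_last eta N K r : (0 < N)%Z -> F_QCF eta N K r (N + 1)%Z = - eta_hat eta (r N).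
Proof.
  intros HN. unfold F_QCF. destruct (Z.eqb_spec (N + 1) (- N)); [lia|].
  now rewrite Z.eqb_refl.
Qed.

Lemma F_QCF_continuum eta N K r j : j <> (- N)%Z -> j <> (N + 1)%Z ->
  ~ (- K + 1 <= j <= K)%Z ->
  F_QCF eta N K r j = eta_hat eta (r j) - eta_hat eta (r (j - 1)%Z).
Proof.
  intros H1 H2 H3. unfold F_QCF.
  destruct (Z.eqb_spec j (- N)); [lia|]. destruct (Z.eqb_spec j (N + 1)); [lia|].
  destruct (Z.leb_spec (- K + 1) j), (Z.leb_spec j K); simpl; easy || lia.
Qed.

Lemma F_QCF_atomistic eta N K r j : j <> (- N)%Z -> j <> (N + 1)%Z ->
  (- K + 1 <= j <= K)%Z ->
  F_QCF eta N K r j = atom_stress eta r j - atom_stress eta r (j - 1)%Z.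
Proof.
  intros H1 H2 H3. unfold F_QCF, atom_stress.
  destruct (Z.eqb_spec j (- N)); [lia|]. destruct (Z.eqb_spec j (N + 1)); [lia|].
  destruct (Z.leb_spec (- K + 1) j), (Z.leb_spec j K); simpl; try lia.
  replace (j - 1 + 1)%Z with j by ring. replace (j - 1 - 1)%Z with (j - 2)%Z by ring.
  rewrite (Rplus_comm (r (j - 1)%Z) (r j)). ring.
Qed.

Lemma F_QCF_reflect eta N K r j : (0 < K)%Z -> (K < N - 1)%Z ->
  (forall k, (- N <= k <= N)%Z -> r (- k)%Z = r k) -> (1 <= j <= N + 1)%Z ->
  F_QCF eta N K r (1 - j)%Z = - F_QCF eta N K r j.
Proof.
  intros HK HKN Hs Hj.
  destruct (Z.eq_dec j (N + 1)) as [->|].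
  { rewrite F_QCF_last by lia. replace (1 - (N + 1))%Z with (- N)%Z by ring.
    rewrite F_QCF_first, Hs by lia. ring. }
  replace (1 - j)%Z with (- (j - 1))%Z by ring.
  destruct (Z_le_dec j K).
  - rewrite !F_QCF_atomistic by lia.
    replace (- (j - 1) - 1)%Z with (- j)%Z by ring.
    rewrite !atom_stress_reflect by (intros k Hk; apply Hs; lia). ring.
  - rewrite !F_QCF_continuum by lia.
    replace (- (j - 1) - 1)%Z with (- j)%Z by ring.
    rewrite !Hs by lia. ring.
Qed.

Lemma Phi_first N f : Phi N f (- N)%Z = - f (- N)%Z.
Proof. unfold Phi. replace (- N + N)%Z with 0%Z by ring. simpl. do 2 f_equal. Qed.

Lemma Phi_step N f j : (- N < j)%Z -> Phi N f j = Phi N f (j - 1)%Z - f j.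
Proof.
  intros Hj. unfold Phi.
  replace (Z.to_nat (j + N)) with (S (Z.to_nat (j - 1 + N))) by lia.
  rewrite tech5. replace (Z.of_nat (S (Z.to_nat (j - 1 + N))) - N)%Z with j by lia.
  ring.
Qed.

Lemma symmetric_vec_mirror N r : symmetric_vec N r ->
  forall k, (- N <= k <= N)%Z -> r (- k)%Z = r k.
Proof.
  intros Hs k Hk. destruct (Z_lt_le_dec 0 k); [apply Hs; lia|].
  destruct (Z.eq_dec k 0) as [->|]; [reflexivity|].
  rewrite <- (Hs (- k)%Z) by lia. now rewrite Z.opp_involutive.
Qed.

Lemma equilibrium_of_left_half eta N K r f : (0 < K)%Z -> (K < N - 1)%Z ->
  (forall j, (0 <= j <= N)%Z -> f (j + 1)%Z = - f (- j)%Z) ->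
  (forall k, (- N <= k <= N)%Z -> r (- k)%Z = r k) ->
  (forall j, (- N <= j <= 0)%Z -> F_QCF eta N K r j + f j = 0) ->
  forall j, (- N <= j <= N + 1)%Z -> F_QCF eta N K r j + f j = 0.
Proof.
  intros HK HKN Hf Hs Hleft j Hj.
  destruct (Z_le_dec j 0); [apply Hleft; lia|].
  pose proof (F_QCF_reflect eta N K r j HK HKN Hs ltac:(lia)).
  pose proof (Hf (j - 1)%Z ltac:(lia)) as Hfj.
  replace (j - 1 + 1)%Z with j in Hfj by ring.
  replace (- (j - 1))%Z with (1 - j)%Z in Hfj by ring.
  pose proof (Hleft (1 - j)%Z ltac:(lia)). lra.
Qed.

Section SymmetricChain.
Variables (eta : R -> R) (rL rU mU mL : R) (N K : Z) (f : Z -> R).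
Hypothesis rL_pos : 0 < rL.
Hypothesis rL_lt_rU : rL < rU.
Hypothesis near_slope : forall x y, rL <= x <= y -> y <= rU -> mU * (y - x) <= eta y - eta x.
Hypothesis far_slope : forall u v, 2 * rL <= v <= u -> mL * (u - v) <= eta u - eta v.
Hypothesis far_antitone : forall u v, 2 * rL <= v <= u -> eta u <= eta v.
Hypothesis mL_nonpos : mL <= 0.
Hypothesis dominance : 0 < mU + 4 * mL.
Hypothesis eta_cont : forall x, 0 < x -> continuity_pt eta x.
Hypothesis K_pos : (0 < K)%Z.
Hypothesis K_lt_N : (K < N - 1)%Z.
Hypothesis f_antisym : forall j, (0 <= j <= N)%Z -> f (j + 1)%Z = - f (- j)%Z.
Hypothesis Phi_bounds : forall j, (- N <= j <= N)%Z ->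
  eta rL + 4 * eta (2 * rL) - 2 * eta (2 * rU) < Phi N f j /\
  Phi N f j < eta rU + 4 * eta (2 * rU) - 2 * eta (2 * rL).

Local Notation P := (Phi N f).
Local Notation m := (mU + 4 * mL).

Lemma far_increment_ge u v d : 2 * rL <= u -> 2 * rL <= v -> u - v <= d -> 0 <= d ->
  mL * d <= eta u - eta v.
Proof.
  intros Hu Hv Hd Hd0. destruct (Rle_dec v u).
  - pose proof (far_slope u v ltac:(lra)). nra.
  - pose proof (far_antitone v u ltac:(lra)). nra.
Qed.

Lemma far_range u : 2 * rL <= u <= 2 * rU -> eta (2 * rU) <= eta u <= eta (2 * rL).
Proof. intros Hu. split; apply far_antitone; lra. Qed.

Definition cmax : R := 2 * (eta (2 * rL) - eta (2 * rU)).

Lemma cmax_nonneg : 0 <= cmax.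
Proof. unfold cmax. pose proof (far_antitone (2 * rU) (2 * rL) ltac:(lra)). lra. Qed.

Lemma eta_hat_increment x y : rL <= x <= y -> y <= rU ->
  m * (y - x) <= eta_hat eta y - eta_hat eta x.
Proof.
  intros Hx Hy. unfold eta_hat. pose proof (near_slope x y Hx Hy).
  pose proof (far_slope (2 * y) (2 * x) ltac:(lra)). lra.
Qed.

Lemma eta_hat_inj x y : rL <= x <= rU -> rL <= y <= rU ->
  eta_hat eta x = eta_hat eta y -> x = y.
Proof.
  intros Hx Hy E. destruct (Rtotal_order x y) as [H|[H|H]]; auto.
  - pose proof (eta_hat_increment x y ltac:(lra) ltac:(lra)). nra.
  - pose proof (eta_hat_increment y x ltac:(lra) ltac:(lra)). nra.
Qed.

Lemma eta_hat_continuity_pt x : 0 < x -> continuity_pt (eta_hat eta) x.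
Proof.
  intros Hx. unfold eta_hat. apply continuity_pt_plus; [now apply eta_cont|].
  apply continuity_pt_mult; [apply continuity_pt_const; intros ? ?; reflexivity|].
  apply (continuity_pt_comp (fun y => 2 * y) eta); [reg | apply eta_cont; lra].
Qed.

Lemma rcont_exists j : (- N <= j <= N)%Z ->
  exists y, rL < y < rU /\ eta_hat eta y = P j.
Proof.
  intros Hj. destruct (Phi_bounds j Hj). pose proof cmax_nonneg. unfold cmax in *.
  assert (Hends : eta_hat eta rL < P j < eta_hat eta rU) by (unfold eta_hat; lra).
  destruct (IVT_closed (eta_hat eta) rL rU (P j)) as [y [Hy E]];
    [lra | intros x Hx; apply eta_hat_continuity_pt; lra | lra |].
  exists y. split; [|exact E].
  destruct (Req_dec y rL) as [->|]; [lra|]. destruct (Req_dec y rU) as [->|]; [lra|]. lra.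
Qed.

Definition rcont (j : Z) : R :=
  epsilon (inhabits 0) (fun y => rL < y < rU /\ eta_hat eta y = P j).

Lemma rcont_spec j : (- N <= j <= N)%Z -> rL < rcont j < rU /\ eta_hat eta (rcont j) = P j.
Proof. intros Hj. unfold rcont. apply epsilon_spec. now apply rcont_exists. Qed.

Definition interior (j : Z) : Prop := (- K + 1 <= j <= 0)%Z.

Definition assemble (x : Z -> R) (k : Z) : R :=
  if (- Z.abs k <=? - K)%Z then rcont (- Z.abs k)%Z else x (- Z.abs k)%Z.

Local Notation sigma x := (atom_stress eta (assemble x)).

Lemma assemble_sym x k : assemble x (- k)%Z = assemble x k.
Proof. unfold assemble. now rewrite Z.abs_opp. Qed.

Lemma assemble_interior x j : interior j -> assemble x j = x j.
Proof.
  unfold interior, assemble. intros Hj. replace (- Z.abs j)%Z with j by lia.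
  destruct (Z.leb_spec j (- K)); [lia|reflexivity].
Qed.

Lemma assemble_continuum x j : (j <= - K)%Z -> assemble x j = rcont j.
Proof.
  unfold assemble. intros Hj. replace (- Z.abs j)%Z with j by lia.
  destruct (Z.leb_spec j (- K)); [reflexivity|lia].
Qed.

Lemma assemble_bounds x : box interior rL rU x ->
  forall k, (- N <= k <= N)%Z -> rL <= assemble x k <= rU.
Proof.
  intros Bx k Hk. unfold assemble. destruct (Z.leb_spec (- Z.abs k) (- K)).
  - pose proof (rcont_spec (- Z.abs k) ltac:(lia)). lra.
  - apply Bx. unfold interior. lia.
Qed.

Lemma assemble_diff x y d : 0 <= d -> (forall i, interior i -> x i - y i <= d) ->
  forall k, assemble x k - assemble y k <= d.
Proof.
  intros Hd Hxy k. unfold assemble. destruct (Z.leb_spec (- Z.abs k) (- K)).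
  - lra.
  - apply Hxy. unfold interior. lia.
Qed.

Lemma assemble_upd_neq x j y k : (- Z.abs k)%Z <> j -> assemble (upd x j y) k = assemble x k.
Proof. intros H. unfold assemble. destruct (_ <=? _)%Z; [reflexivity|]. now apply upd_neq. Qed.

Lemma assemble_upd_eq x j y : interior j -> assemble (upd x j y) j = y.
Proof. intros Hj. rewrite assemble_interior by exact Hj. apply upd_eq. Qed.

Lemma atom_stress_dominant x y j : box interior rL rU x -> box interior rL rU y ->
  interior j -> 0 <= x j - y j -> (forall i, interior i -> x i - y i <= x j - y j) ->
  m * (x j - y j) <= sigma x j - sigma y j.
Proof.
  intros Bx By Hj Hd0 Hmax. unfold atom_stress.
  rewrite (assemble_interior x j Hj), (assemble_interior y j Hj).
  assert (Hj' := Hj). unfold interior in Hj'.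
  pose proof (assemble_bounds x Bx (j + 1) ltac:(lia)).
  pose proof (assemble_bounds y By (j + 1) ltac:(lia)).
  pose proof (assemble_bounds x Bx (j - 1) ltac:(lia)).
  pose proof (assemble_bounds y By (j - 1) ltac:(lia)).
  pose proof (assemble_diff x y _ Hd0 Hmax (j + 1)).
  pose proof (assemble_diff x y _ Hd0 Hmax (j - 1)).
  pose proof (Bx j Hj). pose proof (By j Hj).
  pose proof (near_slope (y j) (x j) ltac:(lra) ltac:(lra)).
  pose proof (far_increment_ge (x j + assemble x (j + 1)%Z) (y j + assemble y (j + 1)%Z)
    (2 * (x j - y j)) ltac:(lra) ltac:(lra) ltac:(lra) ltac:(lra)).
  pose proof (far_increment_ge (x j + assemble x (j - 1)%Z) (y j + assemble y (j - 1)%Z)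
    (2 * (x j - y j)) ltac:(lra) ltac:(lra) ltac:(lra) ltac:(lra)).
  lra.
Qed.

Lemma atom_stress_range x j : box interior rL rU x -> interior j ->
  eta (x j) + 2 * eta (2 * rU) <= sigma x j <= eta (x j) + 2 * eta (2 * rL).
Proof.
  intros Bx Hj. unfold atom_stress. rewrite (assemble_interior x j Hj).
  assert (Hj' := Hj). unfold interior in Hj'.
  pose proof (assemble_bounds x Bx (j + 1) ltac:(lia)).
  pose proof (assemble_bounds x Bx (j - 1) ltac:(lia)). pose proof (Bx j Hj).
  pose proof (far_range (x j + assemble x (j + 1)%Z) ltac:(lra)).
  pose proof (far_range (x j + assemble x (j - 1)%Z) ltac:(lra)).
  lra.
Qed.

Lemma target_range j c : interior j -> - cmax <= c <= cmax ->
  eta rL + 2 * eta (2 * rL) < P j + c < eta rU + 2 * eta (2 * rU).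
Proof.
  intros Hj Hc. unfold interior in Hj. destruct (Phi_bounds j ltac:(lia)).
  unfold cmax in Hc. lra.
Qed.

Lemma interior_strict x j c : box interior rL rU x -> interior j -> - cmax <= c <= cmax ->
  sigma x j = P j + c -> rL < x j < rU.
Proof.
  intros Bx Hj Hc E. pose proof (atom_stress_range x j Bx Hj).
  pose proof (target_range j c Hj Hc). pose proof (Bx j Hj).
  destruct (Req_dec (x j) rL) as [e|]; [rewrite e in *; lra|].
  destruct (Req_dec (x j) rU) as [e|]; [rewrite e in *; lra|].
  lra.
Qed.

Lemma relax_solvable c x j : - cmax <= c <= cmax -> box interior rL rU x -> interior j ->
  exists y, rL <= y <= rU /\ sigma (upd x j y) j = P j + c.
Proof.
  intros Hc Bx Hj. assert (Hj' := Hj). unfold interior in Hj'.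
  pose proof (assemble_bounds x Bx (j + 1) ltac:(lia)).
  pose proof (assemble_bounds x Bx (j - 1) ltac:(lia)).
  set (p := assemble x (j + 1)%Z) in *. set (q := assemble x (j - 1)%Z) in *.
  assert (E : forall y, sigma (upd x j y) j = eta y + eta (y + p) + eta (y + q)).
  { intros y. unfold atom_stress. rewrite assemble_upd_eq by exact Hj.
    rewrite !assemble_upd_neq by lia. reflexivity. }
  pose proof (target_range j c Hj Hc).
  destruct (IVT_closed (fun y => eta y + eta (y + p) + eta (y + q)) rL rU (P j + c))
    as [y [Hy Ey]].
  - lra.
  - intros y Hy. apply continuity_pt_plus; [apply continuity_pt_plus|].
    + apply eta_cont; lra.
    + apply (continuity_pt_comp (fun y => y + p) eta); [reg | apply eta_cont; lra].
    + apply (continuity_pt_comp (fun y => y + q) eta); [reg | apply eta_cont; lra].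
  - pose proof (far_range (rL + p) ltac:(lra)). pose proof (far_range (rL + q) ltac:(lra)).
    pose proof (far_range (rU + p) ltac:(lra)). pose proof (far_range (rU + q) ltac:(lra)).
    lra.
  - exists y. split; [exact Hy|]. now rewrite E.
Qed.

Lemma interior_solvable c : - cmax <= c <= cmax ->
  exists x, box interior rL rU x /\ forall j, interior j -> sigma x j = P j + c.
Proof.
  intros Hc.
  apply (dominant_system_solvable (- K + 1) 0 rL rU m (fun x => sigma x));
    [exact dominance | exact atom_stress_dominant | | lra].
  intros x j Bx Hj. now apply relax_solvable.
Qed.

Lemma interior_comparison x y c1 c2 : box interior rL rU x -> box interior rL rU y ->
  (forall j, interior j -> sigma x j = P j + c1) ->
  (forall j, interior j -> sigma y j = P j + c2) ->
  forall i, interior i -> m * (x i - y i) <= Rmax 0 (c1 - c2).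
Proof.
  intros Bx By Ex Ey.
  apply (dominant_comparison (- K + 1) 0 rL rU m (fun x => sigma x));
    [exact dominance | exact atom_stress_dominant | exact Bx | exact By |].
  intros j Hj. rewrite Ex, Ey by exact Hj. lra.
Qed.

(* clamping c makes [interior_sol] globally Lipschitz, hence continuous at the ends of
   [-cmax, cmax] *)
Definition interior_sol (c : R) : Z -> R :=
  epsilon (inhabits (fun _ => 0)) (fun x => box interior rL rU x /\
    forall j, interior j -> sigma x j = P j + clamp (- cmax) cmax c).

Lemma interior_sol_spec c : box interior rL rU (interior_sol c) /\
  forall j, interior j -> sigma (interior_sol c) j = P j + clamp (- cmax) cmax c.
Proof.
  unfold interior_sol. apply epsilon_spec. apply interior_solvable.
  apply clamp_in. pose proof cmax_nonneg. lra.
Qed.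

Lemma interior_sol_lipschitz c c' i : interior i ->
  m * Rabs (interior_sol c i - interior_sol c' i) <= Rabs (c - c').
Proof.
  intros Hi.
  destruct (interior_sol_spec c) as [B1 E1]. destruct (interior_sol_spec c') as [B2 E2].
  pose proof (interior_comparison _ _ _ _ B1 B2 E1 E2 i Hi) as H12.
  pose proof (interior_comparison _ _ _ _ B2 B1 E2 E1 i Hi) as H21.
  pose proof (clamp_lipschitz (- cmax) cmax c c') as Hclamp.
  revert H12 H21 Hclamp.
  generalize (clamp (- cmax) cmax c) (clamp (- cmax) cmax c'). intros a b H12 H21 Hclamp.
  unfold Rmax in *. repeat destruct Rle_dec; unfold Rabs in *; repeat destruct Rcase_abs; nra.
Qed.

Definition coupling (t : R) : R :=
  eta (rcont (- K) + t) + eta (rcont (- K) + rcont (- K - 1)%Z) - 2 * eta (2 * rcont (- K)).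

Lemma coupling_bound t : rL <= t <= rU -> - cmax <= coupling t <= cmax.
Proof.
  intros Ht. unfold coupling, cmax.
  destruct (rcont_spec (- K) ltac:(lia)) as [A _].
  destruct (rcont_spec (- K - 1) ltac:(lia)) as [B _].
  pose proof (far_range (rcont (- K) + t) ltac:(lra)).
  pose proof (far_range (rcont (- K) + rcont (- K - 1)%Z) ltac:(lra)).
  pose proof (far_range (2 * rcont (- K)) ltac:(lra)).
  lra.
Qed.

Lemma coupling_antitone t t' : rL <= t -> t <= t' -> coupling t' <= coupling t.
Proof.
  intros Ht Htt'. unfold coupling. destruct (rcont_spec (- K) ltac:(lia)) as [A _].
  pose proof (far_antitone (rcont (- K) + t') (rcont (- K) + t) ltac:(lra)). lra.
Qed.

Lemma coupling_fixpoint :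
  exists c, - cmax <= c <= cmax /\ coupling (interior_sol c (- K + 1)%Z) = c.
Proof.
  assert (H0 : interior (- K + 1)%Z) by (unfold interior; lia).
  set (h c := interior_sol c (- K + 1)%Z).
  assert (h_box : forall c, rL <= h c <= rU) by (intros c; now apply interior_sol_spec).
  pose proof cmax_nonneg.
  destruct (IVT_closed (fun c => c - coupling (h c)) (- cmax) cmax 0) as [c [Hc E]].
  - lra.
  - intros c _. apply continuity_pt_minus; [apply continuity_pt_id|].
    unfold coupling. apply continuity_pt_minus; [apply continuity_pt_plus|];
      try (apply continuity_pt_const; intros ? ?; reflexivity).
    apply (continuity_pt_comp (fun c => rcont (- K) + h c) eta).
    + apply lipschitz_continuity_pt with (/ m); [apply Rinv_0_lt_compat; lra|].
      intros u. replace (rcont (- K) + h u - (rcont (- K) + h c)) with (h u - h c) by ring.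
      apply Rmult_le_reg_l with m; [lra|]. rewrite <- Rmult_assoc, Rinv_r, Rmult_1_l by lra.
      now apply interior_sol_lipschitz.
    + apply eta_cont. destruct (rcont_spec (- K) ltac:(lia)). specialize (h_box c). lra.
  - pose proof (coupling_bound _ (h_box (- cmax))).
    pose proof (coupling_bound _ (h_box cmax)). lra.
  - exists c. split; [exact Hc|]. unfold h in E. lra.
Qed.

Definition reduced_solution (x : Z -> R) : Prop :=
  box interior rL rU x /\
  forall j, interior j -> sigma x j = P j + coupling (x (- K + 1)%Z).

Lemma reduced_solution_exists : exists x, reduced_solution x.
Proof.
  destruct coupling_fixpoint as [c [Hc Hfix]].
  destruct (interior_sol_spec c) as [B E]. rewrite clamp_id in E by exact Hc.
  exists (interior_sol c). split; [exact B|]. intros j Hj. rewrite Hfix. now apply E.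
Qed.

Lemma reduced_solution_unique x y : reduced_solution x -> reduced_solution y ->
  forall i, interior i -> x i = y i.
Proof.
  intros [Bx Ex] [By Ey].
  assert (H0 : interior (- K + 1)%Z) by (unfold interior; lia).
  pose proof (interior_comparison x y _ _ Bx By Ex Ey) as Hxy.
  pose proof (interior_comparison y x _ _ By Bx Ey Ex) as Hyx.
  pose proof (Bx _ H0). pose proof (By _ H0).
  assert (Hc : coupling (x (- K + 1)%Z) = coupling (y (- K + 1)%Z)).
  { destruct (Rle_dec (coupling (x (- K + 1)%Z)) (coupling (y (- K + 1)%Z))).
    - specialize (Hxy _ H0). rewrite Rmax_left in Hxy by lra.
      pose proof (coupling_antitone (x (- K + 1)%Z) (y (- K + 1)%Z) ltac:(lra) ltac:(nra)).
      lra.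
    - specialize (Hyx _ H0). rewrite Rmax_left in Hyx by lra.
      pose proof (coupling_antitone (y (- K + 1)%Z) (x (- K + 1)%Z) ltac:(lra) ltac:(nra)).
      lra. }
  intros i Hi. specialize (Hxy i Hi). specialize (Hyx i Hi).
  rewrite Hc, Rminus_diag, Rmax_left in Hxy, Hyx by lra. nra.
Qed.

Lemma assemble_strict x : reduced_solution x ->
  forall k, (- N <= k <= N)%Z -> rL < assemble x k < rU.
Proof.
  intros [Bx Ex] k Hk. unfold assemble. destruct (Z.leb_spec (- Z.abs k) (- K)).
  - apply rcont_spec. lia.
  - assert (Hi : interior (- Z.abs k)) by (unfold interior; lia).
    apply (interior_strict x _ (coupling (x (- K + 1)%Z)) Bx Hi); [|now apply Ex].
    apply coupling_bound, Bx. unfold interior; lia.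
Qed.

Definition jump (r : Z -> R) : R := atom_stress eta r (- K) - eta_hat eta (r (- K)%Z).

Definition stress (r : Z -> R) (j : Z) : R :=
  if (j <=? - K)%Z then eta_hat eta (r j) else atom_stress eta r j - jump r.

Lemma F_QCF_stress r j : (- N < j <= 0)%Z ->
  F_QCF eta N K r j = stress r j - stress r (j - 1)%Z.
Proof.
  intros Hj. unfold stress.
  destruct (Z.leb_spec j (- K)), (Z.leb_spec (j - 1) (- K)); try lia.
  - apply F_QCF_continuum; lia.
  - rewrite F_QCF_atomistic by lia. replace (j - 1)%Z with (- K)%Z by lia.
    unfold jump. ring.
  - rewrite F_QCF_atomistic by lia. ring.
Qed.

Lemma left_equilibrium_iff r :
  (forall j, (- N <= j <= 0)%Z -> F_QCF eta N K r j + f j = 0) <->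
  (forall j, (- N <= j <= 0)%Z -> stress r j = P j).
Proof.
  assert (first : stress r (- N)%Z = F_QCF eta N K r (- N)%Z).
  { rewrite F_QCF_first. unfold stress. destruct (Z.leb_spec (- N) (- K)); [reflexivity|lia]. }
  split.
  - intros Heq j Hj. enough (stress r j - P j = 0) by lra.
    apply (eq0_of_steps (fun j => stress r j - P j) (- N) 0); [| |exact Hj]; cbv beta.
    + rewrite first, Phi_first. pose proof (Heq (- N)%Z ltac:(lia)). lra.
    + intros k Hk. pose proof (Heq k ltac:(lia)) as Hk'.
      rewrite F_QCF_stress in Hk' by lia. rewrite (Phi_step N f k) by lia. lra.
  - intros Hs j Hj. destruct (Z.eq_dec j (- N)) as [->|].
    + rewrite <- first, Hs, Phi_first by lia. ring.
    + rewrite F_QCF_stress, Hs, Hs, (Phi_step N f j) by lia. ring.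
Qed.

Lemma stress_congr r s j : (forall k, (- N <= k <= 1)%Z -> r k = s k) ->
  (- N <= j <= 0)%Z -> stress r j = stress s j.
Proof.
  intros Hrs Hj. unfold stress, jump, atom_stress.
  destruct (Z.leb_spec j (- K)); rewrite !Hrs by lia; reflexivity.
Qed.

Lemma jump_assemble x : jump (assemble x) = coupling (x (- K + 1)%Z).
Proof.
  unfold jump, atom_stress, coupling, eta_hat.
  rewrite (assemble_interior x (- K + 1)%Z) by (unfold interior; lia).
  rewrite !assemble_continuum by lia. ring.
Qed.

Lemma reduced_solution_iff x : box interior rL rU x ->
  reduced_solution x <-> forall j, (- N <= j <= 0)%Z -> stress (assemble x) j = P j.
Proof.
  intros Bx. unfold reduced_solution, stress. rewrite jump_assemble. split.
  - intros [_ Ex] j Hj. destruct (Z.leb_spec j (- K)).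
    + rewrite assemble_continuum by lia. apply rcont_spec. lia.
    + rewrite Ex by (unfold interior; lia). ring.
  - intros Hs. split; [exact Bx|]. intros j Hj. unfold interior in Hj.
    specialize (Hs j ltac:(lia)). destruct (Z.leb_spec j (- K)); [lia|]. lra.
Qed.

Lemma solution_continuum r : (forall j, (- N <= j <= N)%Z -> rL < r j < rU) ->
  (forall j, (- N <= j <= 0)%Z -> stress r j = P j) ->
  forall k, (- N <= k <= - K)%Z -> r k = rcont k.
Proof.
  intros Hb Hs k Hk. destruct (rcont_spec k ltac:(lia)) as [Hc Ec].
  pose proof (Hs k ltac:(lia)) as E. unfold stress in E.
  destruct (Z.leb_spec k (- K)); [|lia].
  pose proof (Hb k ltac:(lia)). apply eta_hat_inj; lra.
Qed.

Lemma assemble_unique r x : (forall k, (- N <= k <= N)%Z -> r (- k)%Z = r k) ->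
  (forall k, (- N <= k <= - K)%Z -> r k = rcont k) -> (forall k, interior k -> r k = x k) ->
  forall k, (- N <= k <= N)%Z -> r k = assemble x k.
Proof.
  intros Hs Hc Hx k Hk.
  replace (r k) with (r (- Z.abs k)%Z).
  - unfold assemble. destruct (Z.leb_spec (- Z.abs k) (- K)).
    + apply Hc. lia.
    + apply Hx. unfold interior. lia.
  - destruct (Z_le_dec 0 k).
    + rewrite Z.abs_eq by lia. apply Hs. lia.
    + rewrite Z.abs_neq, Z.opp_involutive by lia. reflexivity.
Qed.

Theorem symmetric_equilibrium_exists_unique :
  exists r : Z -> R,
    ((forall j : Z, (- N <= j <= N)%Z -> rL < r j < rU) /\
     symmetric_vec N r /\
     (forall j : Z, (- N <= j <= N + 1)%Z -> F_QCF eta N K r j + f j = 0)) /\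
    (forall r' : Z -> R,
       (forall j : Z, (- N <= j <= N)%Z -> rL < r' j < rU) ->
       symmetric_vec N r' ->
       (forall j : Z, (- N <= j <= N + 1)%Z -> F_QCF eta N K r' j + f j = 0) ->
       forall j : Z, (- N <= j <= N)%Z -> r' j = r j).
Proof.
  destruct reduced_solution_exists as [x Hx].
  exists (assemble x). split; [split; [|split]|].
  - now apply assemble_strict.
  - intros j _. apply assemble_sym.
  - apply equilibrium_of_left_half; auto; [intros; apply assemble_sym|].
    apply left_equilibrium_iff, reduced_solution_iff; [apply Hx | exact Hx].
  - intros r' Hb Hs Heq.
    pose proof (symmetric_vec_mirror N r' Hs) as Hs'.
    assert (Hleft : forall j, (- N <= j <= 0)%Z -> stress r' j = P j)
      by (apply left_equilibrium_iff; intros j Hj; apply Heq; lia).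
    pose proof (solution_continuum r' Hb Hleft) as Hc.
    pose proof (assemble_unique r' r' Hs' Hc (fun _ _ => eq_refl)) as Hself.
    assert (Hred : reduced_solution r').
    { apply reduced_solution_iff.
      - intros j Hj. unfold interior in Hj. pose proof (Hb j ltac:(lia)). lra.
      - intros j Hj. rewrite <- (stress_congr r' (assemble r') j); [now apply Hleft | |exact Hj].
        intros k Hk. apply Hself. lia. }
    apply (assemble_unique r' x Hs' Hc). intros k Hk. now apply reduced_solution_unique.
Qed.

End SymmetricChain.

Theorem corollary4p6
  (phi eta eta1 eta2 : R -> R)
  (* phi in C^3((0,oo)), eta = phi', eta1 = eta', eta2 = eta'' *)
  (Hphi : forall x, 0 < x -> is_derive phi x (eta x))
  (Heta : forall x, 0 < x -> is_derive eta x (eta1 x))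
  (Heta1 : forall x, 0 < x -> is_derive eta1 x (eta2 x))
  (Heta2c : forall x, 0 < x -> continuous eta2 x)
  (a0 rt1 rt2 a1 : R)
  (Hconst : 0 < a0 /\ a0 < rt1 /\ rt1 < rt2 /\ rt2 < 2 * a0)
  (Ha1 : a0 < a1)
  (H1a : forall x, 0 < x < rt1 -> eta1 x > 0)
  (H1b : forall x, x > rt1 -> eta1 x < 0)
  (H2a : forall x, 0 < x < rt2 -> eta2 x < 0)
  (H2b : forall x, x > rt2 -> eta2 x > 0)
  (H3a : forall x, 0 < x < a0 -> eta_hat eta x < 0)
  (H3b : forall x, x > a0 -> eta_hat eta x > 0)
  (* hat eta'(r) = eta'(r) + 4 eta'(2r) *)
  (H4a : forall x, 0 < x < a1 -> eta1 x + 4 * eta1 (2 * x) > 0)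
  (H4b : forall x, x > a1 -> eta1 x + 4 * eta1 (2 * x) < 0)
  (N K : Z) (HK : (0 < K)%Z) (HKN : (K < N - 1)%Z)
  (f : Z -> R)
  (Hf : forall j : Z, (0 <= j <= N)%Z -> f (j + 1)%Z = - f (- j)%Z)
  (rL rU : R)
  (HrL : rt2 / 2 < rL) (HrLU : rL < rU)
  (Hdiff : eta1 rU + 12 * eta1 (2 * rL) >= 0)
  (HPhi : forall j : Z, (- N <= j <= N)%Z ->
     eta rL + 4 * eta (2 * rL) - 2 * eta (2 * rU) < Phi N f j /\
     Phi N f j < eta rU + 4 * eta (2 * rU) - 2 * eta (2 * rL)) :
  exists r : Z -> R,
    ((forall j : Z, (- N <= j <= N)%Z -> rL < r j < rU) /\
     symmetric_vec N r /\
     (forall j : Z, (- N <= j <= N + 1)%Z -> F_QCF eta N K r j + f j = 0)) /\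
    (forall r' : Z -> R,
       (forall j : Z, (- N <= j <= N)%Z -> rL < r' j < rU) ->
       symmetric_vec N r' ->
       (forall j : Z, (- N <= j <= N + 1)%Z -> F_QCF eta N K r' j + f j = 0) ->
       forall j : Z, (- N <= j <= N)%Z -> r' j = r j).
Proof.
  assert (Hrt : 0 < rt1 < rt2) by lra.
  apply (symmetric_equilibrium_exists_unique eta rL rU (eta1 rU) (eta1 (2 * rL)));
    try assumption.
  - lra.
  - intros x y Hx Hy. eapply eta_near_slope; eauto.
  - intros u v Huv. eapply eta_far_slope; eauto.
  - intros u v Huv. eapply eta_far_antitone; eauto.
  - apply Rlt_le. eapply eta1_far_neg; eauto.
  - eapply near_far_dominance; eauto.
  - intros x Hx. apply (is_derive_continuity_pt eta x (eta1 x)). auto.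
Qed.
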